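(* For all finite sets of formulas $\Gamma,\Delta$: $\Gamma\Vdash\Delta$ if and only if $\Gamma\Vdash_{\mathcal{ST}}\Delta$.
   Context: Fix a countably infinite set $\mathsf{At}$ of atoms. Formulas are built from atoms and the constant $\bot$ using the binary connectives $\land,\lor,\to$. All contexts ($\Gamma,\Delta,\Theta,\Sigma,\dots$) are finite sets (not multisets) of formulas; a comma denotes union; a subscript $\mathsf{At}$ indicates a finite set of atoms. An atomic sequent has the form $\Gamma_{\mathsf{At}} \Rightarrow \Delta_{\mathsf{At}}$. An atomic rule has finitely many (possibly zero) atomic sequents as premises and one atomic sequent as conclusion; a rule with zero premises is an atomic axiom. A base is a (possibly empty) set of atomic rules; $\mathcal{C}\supseteq\mathcal{B}$ ($\mathcal{C}$ extends $\mathcal{B}$) if $\mathcal{C}$ contains every rule of $\mathcal{B}$. Derivability $\vdash_{\mathcal{B}}$ of atomic sequents is the least relation such that: (Axiom/Weakening) if an atomic axiom with conclusion $\Gamma_{\mathsf{At}}\Rightarrow\Delta_{\mathsf{At}}$ is in $\mathcal{B}$, then $\vdash_{\mathcal{B}} \Theta_{\mathsf{At}},\Gamma_{\mathsf{At}}\Rightarrow\Delta_{\mathsf{At}},\Sigma_{\mathsf{At}}$ for all sets of atoms $\Theta_{\mathsf{At}},\Sigma_{\mathsf{At}}$; (Mix) if a rule with premises $\Gamma^i_{\mathsf{At}}\Rightarrow\Delta^i_{\mathsf{At}}$ ($1\le i\le n$) and conclusion $\Gamma_{\mathsf{At}}\Rightarrow\Delta_{\mathsf{At}}$ is in $\mathcal{B}$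 and $\vdash_{\mathcal{B}} \Theta^i_{\mathsf{At}},\Gamma^i_{\mathsf{At}}\Rightarrow\Delta^i_{\mathsf{At}},\Sigma^i_{\mathsf{At}}$ for each $i$, then $\vdash_{\mathcal{B}} \Theta^1_{\mathsf{At}},\dots,\Theta^n_{\mathsf{At}},\Gamma_{\mathsf{At}}\Rightarrow\Delta_{\mathsf{At}},\Sigma^1_{\mathsf{At}},\dots,\Sigma^n_{\mathsf{At}}$. Support $\Vdash_{\mathcal{B}}$: (At) $\Vdash_{\mathcal{B}}\Gamma_{\mathsf{At}}$ iff $\vdash_{\mathcal{B}}\ \Rightarrow\Gamma_{\mathsf{At}}$; ($\land$) $\Vdash_{\mathcal{B}} A\land B,\Gamma$ iff $\Vdash_{\mathcal{B}}A,\Gamma$ and $\Vdash_{\mathcal{B}}B,\Gamma$; ($\lor$) $\Vdash_{\mathcal{B}}A\lor B,\Gamma$ iff $\Vdash_{\mathcal{B}}A,B,\Gamma$; ($\to$) $\Vdash_{\mathcal{B}}A\to B,\Gamma$ iff $A\Vdash_{\mathcal{B}}B,\Gamma$; ($\bot$) $\Vdash_{\mathcal{B}}\bot,\Gamma$ iff $\Vdash_{\mathcal{B}}\Gamma$; (Inf) for $n\ge1$, $\{A^1,\dots,A^n\}\Vdash_{\mathcal{B}}\Delta$ iff for every $\mathcal{C}\supseteq\mathcal{B}$ and all sets of atoms $\Theta^1_{\mathsf{At}},\dots,\Theta^n_{\mathsf{At}}$, if $\Vdash_{\mathcal{C}}\Theta^i_{\mathsf{At}},A^i$ for all $i$ then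 $\Vdash_{\mathcal{C}}\Theta^1_{\mathsf{At}},\dots,\Theta^n_{\mathsf{At}},\Delta$ (and $\varnothing\Vdash_{\mathcal{B}}\Delta$ means $\Vdash_{\mathcal{B}}\Delta$). The atomic identity rule $\mathsf{Ainit}$ is the atomic axiom $\Gamma_{\mathsf{At}},p\Rightarrow p,\Delta_{\mathsf{At}}$; the atomic cut rule $\mathsf{Acut}$ has premises $\Gamma^1_{\mathsf{At}}\Rightarrow\Delta^1_{\mathsf{At}},p$ and $p,\Gamma^2_{\mathsf{At}}\Rightarrow\Delta^2_{\mathsf{At}}$ and conclusion $\Gamma^1_{\mathsf{At}},\Gamma^2_{\mathsf{At}}\Rightarrow\Delta^1_{\mathsf{At}},\Delta^2_{\mathsf{At}}$. $\mathcal{ST}$ is the base consisting of all instances of $\mathsf{Ainit}$ and $\mathsf{Acut}$ (all atoms $p$, all sets of atoms). Validity: $\Gamma\Vdash\Delta$ iff $\Gamma\Vdash_{\mathcal{B}}\Delta$ for every base $\mathcal{B}\supseteq\mathcal{ST}$. *)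

From HB Require Import structures.
From mathcomp Require Import all_boot.
From mathcomp Require Import finmap.
Set Implicit Arguments. Unset Strict Implicit. Unset Printing Implicit Defensive.
Local Open Scope fset_scope.

Definition atom := nat.

Inductive formula : Type :=
| Atom of atom
| Bot
| And of formula & formula
| Or  of formula & formula
| Imp of formula & formula.

Fixpoint fcode (f : formula) : GenTree.tree nat :=
  match f with
  | Atom p => GenTree.Leaf p
  | Bot => GenTree.Node 0 [::]
  | And a b => GenTree.Node 1 [:: fcode a; fcode b]
  | Or a b => GenTree.Node 2 [:: fcode a; fcode b]
  | Imp a b => GenTree.Node 3 [:: fcode a; fcode b]
  end.
Fixpoint fdecode (t : GenTree.tree nat) : option formula :=
  match t with
  | GenTree.Leaf p => Some (Atom p)
  | GenTree.Node 0 [::] => Some Bot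
  | GenTree.Node 1 [:: a; b] =>
      if (fdecode a, fdecode b) is (Some x, Some y) then Some (And x y) else None
  | GenTree.Node 2 [:: a; b] =>
      if (fdecode a, fdecode b) is (Some x, Some y) then Some (Or x y) else None
  | GenTree.Node 3 [:: a; b] =>
      if (fdecode a, fdecode b) is (Some x, Some y) then Some (Imp x y) else None
  | _ => None
  end.
Lemma fcodeK : pcancel fcode fdecode.
Proof. by elim=> //= [a -> b ->|a -> b ->|a -> b ->]. Qed.
HB.instance Definition _ := Countable.copy formula (pcan_type fcodeK).

Definition asequent := ({fset atom} * {fset atom})%type.

Record arule := ARule { premises : seq asequent; conclusion : asequent }.

Definition base := arule -> Prop.
Definition extends (C B : base) : Prop := forall r, B r -> C r.

Inductive derivable (B : base) : asequent -> Prop :=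
| der_axiom (r : arule) (Th Si : {fset atom}) :
    B r -> premises r = [::] ->
    derivable B (Th `|` (conclusion r).1, (conclusion r).2 `|` Si)
| der_mix (r : arule) (Ths Sis : seq {fset atom}) :
    B r -> size Ths = size (premises r) -> size Sis = size (premises r) ->
    (forall i, i < size (premises r) ->
       derivable B (nth fset0 Ths i `|` (nth (fset0, fset0) (premises r) i).1,
                    (nth (fset0, fset0) (premises r) i).2 `|` nth fset0 Sis i)) ->
    derivable B ((\bigcup_(t <- Ths) t) `|` (conclusion r).1,
                 (conclusion r).2 `|` \bigcup_(t <- Sis) t).

Definition Ainit (G D : {fset atom}) (p : atom) : arule :=
  ARule [::] (p |` G, p |` D).
Definition Acut (G1 D1 G2 D2 : {fset atom}) (p : atom) : arule :=
  ARule [:: (G1, p |` D1); (p |` G2, D2)] (G1 `|` G2, D1 `|` D2).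
Definition ST : base := fun r =>
  (exists G D p, r = Ainit G D p) \/
  (exists G1 D1 G2 D2 p, r = Acut G1 D1 G2 D2 p).

(** A context Theta_At, Delta is represented by an accumulator
    [acc] holding its atoms and a list of remaining formulas; complex formulas
    are decomposed from the head of the list.  The first argument is fuel,
    which is always large enough when started at [weight] (see [sup]). *)
Fixpoint fsize (A : formula) : nat :=
  match A with
  | Atom _ | Bot => 1
  | And a b | Or a b | Imp a b => (fsize a + fsize b).+1
  end.
Definition weight (s : seq formula) : nat := sumn (map fsize s).

Fixpoint supF (n : nat) (B : base) (acc : {fset atom}) (s : seq formula) : Prop :=
  match s with
  | [::] => derivable B (fset0, acc)
  | A :: rest =>
    match n with
    | 0 => False
    | n'.+1 =>
      match A with
      | Atom p => supF n' B (p |` acc) rest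
      | Bot => supF n' B acc rest
      | And a b => supF n' B acc (a :: rest) /\ supF n' B acc (b :: rest)
      | Or a b => supF n' B acc (a :: b :: rest)
      | Imp a b =>                                                (* (->) + (Inf), n=1 *)
          forall C : base, extends C B ->
          forall Th : {fset atom},
            supF n' C Th [:: a] -> supF n' C (Th `|` acc) (b :: rest)
      end
    end
  end.

Definition sup (B : base) (acc : {fset atom}) (s : seq formula) : Prop :=
  supF (weight s) B acc s.

Definition supports (B : base) (D : {fset formula}) : Prop :=
  sup B fset0 (enum_fset D).

Definition infers (B : base) (G D : {fset formula}) : Prop :=
  if G == fset0 then supports B D
  else forall C : base, extends C B ->
       forall Th : formula -> {fset atom},
         (forall A, A \in G -> sup C (Th A) [:: A]) ->
         sup C (\bigcup_(A <- enum_fset G) Th A) (enum_fset D).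

Definition valid (G D : {fset formula}) : Prop :=
  forall B : base, extends B ST -> infers B G D.

(* Support is monotone under extension of bases: atomic derivability only
   grows with more rules, and the implication and inference clauses already
   quantify over all extensions.  So support in ST transfers to every base
   extending ST, and conversely ST is itself such a base. *)
From mathcomp Require Import all_boot finmap.

Lemma extends_refl (B : base) : extends B B.
Proof. by []. Qed.

Lemma extends_trans (A B C : base) : extends B A -> extends C B -> extends C A.
Proof. by move=> hBA hCB r /hBA /hCB. Qed.

Lemma derivable_mono (B C : base) s : extends C B -> derivable B s -> derivable C s.
Proof.
move=> hCB; elim=> {s} [r Th Si Br noprem|r Ths Sis Br sizeTh sizeSi _ IH].
- exact: der_axiom (hCB _ Br) noprem.
- exact: der_mix (hCB _ Br) sizeTh sizeSi IH.
Qed.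

Lemma supF_mono n (B C : base) acc s :
  extends C B -> supF n B acc s -> supF n C acc s.
Proof.
elim: n B C acc s => [|n IH] B C acc [|A rest] hCB //=; try exact: derivable_mono.
case: A => [p||a b|a b|a b] /=; try exact: IH.
- by case=> ha hb; split; apply: IH hCB _.
- by move=> h E hEC; apply: h; apply: extends_trans hCB hEC.
Qed.

Lemma infers_mono (B C : base) G D : extends C B -> infers B G D -> infers C G D.
Proof.
rewrite /infers => hCB; case: ifP => _.
- exact: supF_mono.
- by move=> h E hEC; apply: h; apply: extends_trans hCB hEC.
Qed.

Theorem theorem1 (G D : {fset formula}) : valid G D <-> infers ST G D.
Proof.
split=> [h | h B hB].
- exact: h (extends_refl ST).
- exact: infers_mono hB h.
Qed.
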